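(* Let $-1<a<0$ and $\mathbf{g}\in\mathbb{R}^m$. There is a unique $c\in\mathbb{R}$ (with $g_i + c > 0$ for all $i$) such that $\sum_{i=1}^m (g_i+c)^{1/a} = 1$. Furthermore, let $\mathbf{v}\in\Delta^m$ with all $v_i>0$, and $\kappa\ge 0$. Then: (i) if $g_i \le v_i^a + \kappa$ for all $i$, then $c\ge-\kappa$; (ii) if $g_i \ge v_i^a - \frac{\kappa}{v_i}$ for all $i$, then $c \le \frac{\kappa}{\min_i v_i}$; and if, furthermore, $\kappa \le a^2 v_i^{a+1}$ for all $i$, then $c\le m\kappa$.
   Context: $\Delta^m$ is the probability simplex in $\mathbb{R}^m$. *)

From HB Require Import structures.
From mathcomp Require Import all_boot all_order all_algebra.
From mathcomp Require Import all_classical all_reals all_analysis.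
Set Implicit Arguments. Unset Strict Implicit. Unset Printing Implicit Defensive.
Import Order.TTheory GRing.Theory Num.Theory.
Local Open Scope ring_scope.
Local Open Scope classical_set_scope.

Definition in_simplex (R : realType) (m : nat) (v : 'I_m -> R) : Prop :=
  (forall i, 0 <= v i) /\ \sum_(i < m) v i = 1.

(* min_i v_i, as the infimum of the (finite, nonempty when m > 0) range. *)
Definition vmin (R : realType) (m : nat) (v : 'I_m -> R) : R := inf (range v).

From HB Require Import structures.
From mathcomp Require Import all_boot all_order all_algebra.
From mathcomp Require Import all_classical all_reals all_analysis.
From mathcomp Require Import ring lra.

(* The map c |-> sum_i (g_i + c)^(1/a) is continuous and strictly decreasing
   where it is defined, so the normalizing shift exists (IVT) and is unique.
   Each bound on c is proved by contradiction: otherwise every term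
   (g_i + c)^(1/a) would lie strictly on one side of a term h_i with
   sum_i h_i = 1.  For (i) and for the bound kappa / min_i v_i, h_i = v_i.
   For the bound m kappa, h_i = v_i + kappa m^a (m v_i - 1) / a; after scaling
   by u = kappa / v_i^(a+1) and t = m v_i, the inequality
   (v_i^a - kappa / v_i + m kappa)^(1/a) <= h_i follows from Bernoulli's
   inequality, with exponent 1 + a when t >= 1 and with exponent -a when
   t < 1.  The two regimes use kappa m^(a+1) <= a^2 (which follows from
   min_i v_i <= 1/m) and kappa <= a^2 v_i^(a+1) respectively. *)

Set Implicit Arguments.
Unset Strict Implicit.
Unset Printing Implicit Defensive.

Import Order.TTheory GRing.Theory Num.Theory.
Import numFieldNormedType.Exports.
Local Open Scope ring_scope.

Section powR_facts.
Variable R : realType.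
Implicit Types e p x y : R.

Lemma powR_le_bernoulli e y : 0 < e < 1 -> 0 <= y -> y `^ e <= 1 + e * (y - 1).
Proof.
move=> /andP[e0 e1] y0.
(* Young's inequality [a b <= a^p / p + b^q / q] at [a = y^e], [b = 1], [p = 1/e]. *)
have ie0 : 0 < e^-1 by rewrite invr_gt0.
have ie1 : 0 < (1 - e)^-1 by rewrite invr_gt0 subr_gt0.
have := conjugate_powR (powR_ge0 y e) ler01 ie0 ie1.
rewrite !invrK addrC subrK => /(_ erefl).
rewrite mulr1 -powRrM mulfV ?gt_eqF // powRr1 // powR1; lra.
Qed.

Lemma bernoulli_le_powR p y : 1 < p -> 0 <= y -> 1 + p * (y - 1) <= y `^ p.
Proof.
move=> p1 y0; have p0 : 0 < p by lra.
have e01 : 0 < p^-1 < 1 by rewrite invr_gt0 p0 invf_lt1.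
have := powR_le_bernoulli e01 (powR_ge0 y p).
rewrite -powRrM mulfV ?gt_eqF // powRr1 // => le_y.
have := ler_wpM2l (ltW p0) le_y.
by rewrite mulrDr mulr1 mulrA mulfV ?gt_eqF // mul1r; lra.
Qed.

Lemma lt0_ltr_powR p x y : p < 0 -> 0 < x -> x < y -> y `^ p < x `^ p.
Proof.
move=> p0 x0 xy; have y0 : 0 < y by lra.
have [q -> q0] : exists2 q, p = - q & 0 < q by exists (- p); rewrite ?opprK ?oppr_gt0.
rewrite !powRN ltf_pV2 ?posrE ?powR_gt0 //.
by apply: gt0_ltr_powR; rewrite ?nnegrE ?ltW.
Qed.

Lemma lt0_ler_powR p x y : p < 0 -> 0 < x -> x <= y -> y `^ p <= x `^ p.
Proof.
move=> p0 x0; rewrite le_eqVlt => /predU1P[->//|xy].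
exact/ltW/lt0_ltr_powR.
Qed.

Lemma powRD1 p x : 0 < x -> x `^ (p + 1) = x `^ p * x.
Proof. by move=> x0; rewrite powRD ?powRr1 ?ltW //; apply/implyP => _; rewrite gt_eqF. Qed.

Lemma powRVK p x : p != 0 -> 0 <= x -> (x `^ p) `^ p^-1 = x.
Proof. by move=> p0 x0; rewrite -powRrM mulfV // powRr1. Qed.

Lemma lt0_powRV_gt p x y : p < 0 -> 0 < x -> 0 < y -> y < x `^ p -> x < y `^ p^-1.
Proof.
move=> p0 x0 y0 lt_y; rewrite -{1}(powRVK (ltr0_neq0 p0) (ltW x0)).
by apply: lt0_ltr_powR; rewrite ?invr_lt0.
Qed.

Lemma lt0_powRV_lt p x y : p < 0 -> 0 < x -> x `^ p < y -> y `^ p^-1 < x.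
Proof.
move=> p0 x0 lt_y; rewrite -{1}(powRVK (ltr0_neq0 p0) (ltW x0)).
by apply: lt0_ltr_powR; rewrite ?invr_lt0 ?powR_gt0.
Qed.

End powR_facts.

Section perturbation.
Variable R : realType.
Implicit Types a t u x : R.

Lemma powRV_le_bernoulli a x : -1 < a < 0 -> 0 < 1 + x -> 0 < 1 - x / a ->
  (1 + x) `^ a^-1 <= (1 - x / a)^-1.
Proof.
move=> /andP[ha1 ha0] x1 xa; have p1 : 1 < - a^-1.
  by rewrite -invrN invf_gt1 ?oppr_gt0 // ltrNl.
have := bernoulli_le_powR p1 (ltW x1).
rewrite addrAC subrr add0r powRN mulNr -mulrC -/(x / a) => le_pow.
by rewrite -[_ `^ _]invrK lef_pV2 ?posrE ?invr_gt0 ?powR_gt0.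
Qed.

Lemma perturbed_powRV_le a u t : -1 < a < 0 -> 0 < t -> 0 <= u -> u <= a ^+ 2 ->
    u * t `^ (a + 1) <= a ^+ 2 ->
  0 < 1 + u * (t - 1) /\ (1 + u * (t - 1)) `^ a^-1 <= 1 + u * t `^ a * (t - 1) / a.
Proof.
move=> ha t0 u0 ua ut; have /andP[ha1 ha0] := ha; have na0 : 0 < - a by rewrite oppr_gt0.
have a2 : a ^+ 2 < 1 by nra.
set w := u * (t - 1) / (- a).
have wa : u * (t - 1) = w * (- a) by rewrite /w divfK ?gt_eqF.
have pos : 0 < 1 + u * (t - 1) by nra.
have w1 : 0 < 1 + w by nra.
split => //.
have -> : 1 + u * t `^ a * (t - 1) / a = 1 - w * t `^ a.
  by rewrite /w; field; rewrite lt_eqF.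
have wE : 1 - u * (t - 1) / a = 1 + w by rewrite /w invrN mulrN.
apply: (le_trans (powRV_le_bernoulli ha pos _)); rewrite wE //.
suff : 0 <= w * (1 - t `^ a * (1 + w)) by rewrite -div1r ler_pdivrMr //; lra.
have [t1|t1] := leP 1 t.
- have w0 : 0 <= w by rewrite divr_ge0 ?mulr_ge0 ?subr_ge0 // ltW.
  have b1 : t `^ (a + 1) <= 1 + (a + 1) * (t - 1).
    by apply: powR_le_bernoulli; [apply/andP; split; lra | exact: ltW].
  have wt : w * t `^ (a + 1) <= (- a) * (t - 1).
    have : w * (- a) * t `^ (a + 1) <= a ^+ 2 * (t - 1).
      by rewrite -wa mulrAC ler_wpM2r // subr_ge0.
    nra.
  have : t `^ a * (1 + w) <= 1.
    rewrite -(ler_pM2r t0) mul1r; rewrite powRD1 // in b1 wt; lra.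
  nra.
- have w0 : w <= 0 by nra.
  have aw : (- a) * (t - 1) <= w by nra.
  have b2 : t `^ (- a) <= 1 + (- a) * (t - 1).
    by apply: powR_le_bernoulli; [apply/andP; split; lra | exact: ltW].
  have : 1 <= t `^ a * (1 + w).
    rewrite -ler_pdivrMl ?powR_gt0 // mulr1 -powRN; lra.
  nra.
Qed.

Lemma scaled_perturbed_powRV_le a k v M : -1 < a < 0 -> 0 < v -> 0 <= k -> 0 < M ->
    k <= a ^+ 2 * v `^ (a + 1) -> k * M `^ (a + 1) <= a ^+ 2 ->
  0 < v `^ a - k / v + M * k /\
  (v `^ a - k / v + M * k) `^ a^-1 <= v + k * M `^ a * (M * v - 1) / a.
Proof.
move=> ha v0 k0 M0 kv kM; have a0 : a != 0 by case/andP: ha => _ /ltr0_neq0.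
set A := v `^ a; have A0 : 0 < A by rewrite powR_gt0.
set u := k / (A * v); set t := M * v.
have t0 : 0 < t by rewrite mulr_gt0.
have tA : t `^ a = M `^ a * A by rewrite powRM ?ltW.
have ua : u <= a ^+ 2 by rewrite ler_pdivrMr ?mulr_gt0 // -powRD1.
have ut : u * t `^ (a + 1) <= a ^+ 2.
  suff -> : u * t `^ (a + 1) = k * M `^ (a + 1) by [].
  by rewrite !powRD1 // tA /u /t; field; rewrite !gt_eqF.
have [pos le_pow] := perturbed_powRV_le ha t0 (divr_ge0 k0 (ltW (mulr_gt0 A0 v0))) ua ut.
have -> : A - k / v + M * k = A * (1 + u * (t - 1)).
  by rewrite /u /t; field; rewrite !gt_eqF.
have -> : v + k * M `^ a * (M * v - 1) / a = v * (1 + u * t `^ a * (t - 1) / a).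
  by rewrite tA /u /t; field; rewrite a0 !gt_eqF.
split; first exact: mulr_gt0.
by rewrite (powRM _ (ltW A0) (ltW pos)) (powRVK a0 (ltW v0)) ler_wpM2l // ltW.
Qed.

End perturbation.

Section normalizing_shift.
Variable R : realType.

Lemma ex_ord_argmin m (F : 'I_m -> R) : (0 < m)%N -> exists j, forall i, F j <= F i.
Proof.
move=> m0; case: (arg_minP F (isT : predT (Ordinal m0))) => j _ Fj.
by exists j => i; apply: Fj.
Qed.

Lemma ltr_sum_ord m (F G : 'I_m -> R) : (0 < m)%N ->
  (forall i, F i < G i) -> \sum_(i < m) F i < \sum_(i < m) G i.
Proof. by move=> m0 FG; apply: ltr_sum => //; apply/hasP; exists (Ordinal m0). Qed.

Lemma continuous_powR (p x : R) : 0 < x -> {for x, continuous (fun y : R => y `^ p)}.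
Proof.
move=> x0; apply/differentiable_continuous/derivable1_diffP.
by apply: derivable_powR; rewrite in_itv /= x0.
Qed.

Variables (m : nat) (g : 'I_m -> R) (p : R).

Lemma shifted_powR_sum_decr c c' : (0 < m)%N -> p < 0 ->
    (forall i, 0 < g i + c) -> c < c' ->
  \sum_(i < m) (g i + c') `^ p < \sum_(i < m) (g i + c) `^ p.
Proof.
move=> m0 p0 gc cc'; apply: ltr_sum_ord => // i.
by apply: lt0_ltr_powR => //; rewrite ltrD2l.
Qed.

Lemma shifted_powR_sum_continuous c : (forall i, 0 < g i + c) ->
  {for c, continuous (fun c => \sum_(i < m) (g i + c) `^ p)}.
Proof.
move=> gc; apply: cvg_big => [|i _]; first exact: add_continuous.
apply: (@continuous_comp _ _ _ (fun c => g i + c) (fun y : R => y `^ p)).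
  by apply: cvgD; [exact: cvg_cst | exact: cvg_id].
exact: continuous_powR.
Qed.

Lemma exists_unique_normalizing_shift : (0 < m)%N -> p < 0 ->
  exists! c, (forall i, 0 < g i + c) /\ \sum_(i < m) (g i + c) `^ p = 1.
Proof.
move=> m0 p0; pose f c := \sum_(i < m) (g i + c) `^ p.
have [j gj] := ex_ord_argmin g m0.
set c0 := 1 - g j.
have pos c : c0 <= c -> forall i, 0 < g i + c.
  by move=> c0c i; have := gj i; rewrite /c0 in c0c; lra.
set B := m%:R `^ (- p^-1).
have B0 : 0 < B by rewrite powR_gt0 // ltr0n.
have f_c0 : 1 <= f c0.
  rewrite /f (bigD1 j) //= /c0 addrCA subrr addr0 powR1 lerDl.
  by apply: sumr_ge0 => i _; apply: powR_ge0.
have f_c1 : f (c0 + B) <= 1.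
  have le_inv i : (g i + (c0 + B)) `^ p <= m%:R^-1.
    have <- : B `^ p = m%:R^-1.
      by rewrite -powRrM mulNr mulVf ?ltr0_neq0 // powR_inv1 ?ler0n.
    by apply: lt0_ler_powR => //; have := gj i; rewrite /c0; lra.
  apply: le_trans (ler_sum _ (fun i _ => le_inv i)) _.
  by rewrite sumr_const card_ord -[_ *+ m]mulr_natr mulVf // pnatr_eq0 -lt0n.
have [c c01 fc1] : exists2 c, c \in `[c0, c0 + B] & f c = 1.
  apply: IVT; first lra.
    apply: continuous_in_subspaceT => c; rewrite in_setE /= in_itv /= => /andP[c0c _].
    exact/shifted_powR_sum_continuous/pos.
  by rewrite ge_min f_c1 le_max f_c0 orbT.
have gc : forall i, 0 < g i + c by apply: pos; move: c01; rewrite in_itv /= => /andP[].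
exists c; split=> // c' [gc' fc'].
have [lt_c'c|lt_cc'|//] := ltgtP c' c.
- by have := shifted_powR_sum_decr m0 p0 gc' lt_c'c; rewrite fc' -/(f c) fc1 ltxx.
- by have := shifted_powR_sum_decr m0 p0 gc lt_cc'; rewrite fc' -/(f c) fc1 ltxx.
Qed.

End normalizing_shift.

Lemma vminE (R : realType) m (v : 'I_m -> R) j : (forall i, v j <= v i) -> vmin v = v j.
Proof.
move=> vj; apply/eqP; rewrite eq_le; apply/andP; split.
  by apply: ge_inf; [exists (v j) => _ [i _ <-] | exists j].
by apply: lb_le_inf; [exists (v j); exists j | move=> _ [i _ <-]].
Qed.

Section normalizing_shift_bounds.
Variables (R : realType) (m : nat) (a : R) (g v : 'I_m -> R) (c k : R).
Hypotheses (m0 : (0 < m)%N) (a0 : a < 0) (gc : forall i, 0 < g i + c)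
  (sum1 : \sum_(i < m) (g i + c) `^ a^-1 = 1) (v1 : \sum_(i < m) v i = 1)
  (vp : forall i, 0 < v i).

Lemma normalizing_shift_ge : (forall i, g i <= v i `^ a + k) -> - k <= c.
Proof.
move=> hg; rewrite leNgt; apply/negP => lt_c.
suff : \sum_(i < m) v i < \sum_(i < m) (g i + c) `^ a^-1 by rewrite sum1 v1 ltxx.
apply: ltr_sum_ord => // i; apply: lt0_powRV_gt => //.
by have := hg i; lra.
Qed.

Lemma normalizing_shift_le_div_min : 0 <= k ->
  (forall i, v i `^ a - k / v i <= g i) -> c <= k / vmin v.
Proof.
move=> k0 hg; have [j vj] := ex_ord_argmin v m0.
rewrite (vminE vj) leNgt; apply/negP => lt_c.
suff : \sum_(i < m) (g i + c) `^ a^-1 < \sum_(i < m) v i by rewrite sum1 v1 ltxx.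
apply: ltr_sum_ord => // i; apply: lt0_powRV_lt => //.
have : k / v i <= k / v j by rewrite ler_wpM2l // lef_pV2 ?posrE.
by have := hg i; lra.
Qed.

Lemma normalizing_shift_le_mul : -1 < a -> 0 <= k ->
    (forall i, v i `^ a - k / v i <= g i) -> (forall i, k <= a ^+ 2 * v i `^ (a + 1)) ->
  c <= m%:R * k.
Proof.
move=> a1 k0 hg hk; rewrite leNgt; apply/negP => lt_c.
have ha : -1 < a < 0 by apply/andP.
set M := (m%:R : R); have M0 : 0 < M by rewrite ltr0n.
have [j vj] := ex_ord_argmin v m0.
have Mvj : M * v j <= 1.
  have := @ler_sum _ _ (index_enum 'I_m) predT (fun=> v j) v (fun i _ => vj i).
  by rewrite sumr_const card_ord v1 -mulr_natl.
have kM : k * M `^ (a + 1) <= a ^+ 2.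
  apply: (le_trans (ler_wpM2r (powR_ge0 M (a + 1)) (hk j))).
  rewrite -mulrA -(powRM _ (ltW (vp j)) (ltW M0)) mulrC -[leRHS]mul1r.
  rewrite ler_wpM2r ?sqr_ge0 //.
  apply: (@le_trans _ _ (1 `^ (a + 1))); last by rewrite powR1.
  apply: ge0_ler_powR; first lra.
  - by rewrite nnegrE mulr_ge0 // ltW.
  - by rewrite nnegrE.
  - by rewrite mulrC.
pose h i := v i + k * M `^ a * (M * v i - 1) / a.
suff : \sum_(i < m) (g i + c) `^ a^-1 < \sum_(i < m) h i.
  rewrite sum1 big_split /= v1 -mulr_suml -mulr_sumr sumrB -mulr_sumr v1.
  by rewrite sumr_const card_ord mulr1 subrr mulr0 mul0r addr0 ltxx.
apply: ltr_sum_ord => // i.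
have [L0 le_L] := scaled_perturbed_powRV_le ha (vp i) k0 M0 (hk i) kM.
apply: lt_le_trans le_L; apply: lt0_ltr_powR; rewrite ?invr_lt0 //.
by have := hg i; lra.
Qed.

End normalizing_shift_bounds.

Theorem lemma7 (R : realType) (m : nat) (hm : (0 < m)%N) (a : R)
    (ha1 : -1 < a) (ha0 : a < 0) (g : 'I_m -> R) :
  (exists! c : R, (forall i, 0 < g i + c) /\
      \sum_(i < m) (g i + c) `^ (a^-1) = 1) /\
  (forall c : R, (forall i, 0 < g i + c) ->
      \sum_(i < m) (g i + c) `^ (a^-1) = 1 ->
   forall (v : 'I_m -> R), in_simplex v -> (forall i, 0 < v i) ->
   forall kappa : R, 0 <= kappa ->
     ((forall i, g i <= v i `^ a + kappa) -> - kappa <= c) /\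
     ((forall i, v i `^ a - kappa / v i <= g i) ->
        c <= kappa / vmin v /\
        ((forall i, kappa <= a ^+ 2 * v i `^ (a + 1)) -> c <= m%:R * kappa))).
Proof.
split; first by apply: exists_unique_normalizing_shift; rewrite ?invr_lt0.
move=> c gc sum1 v [_ v1] vp k k0; split.
  exact: normalizing_shift_ge hm ha0 gc sum1 v1 vp.
move=> hg; split; first exact: normalizing_shift_le_div_min hm ha0 sum1 v1 vp k0 hg.
exact: normalizing_shift_le_mul hm ha0 sum1 v1 vp ha1 k0 hg.
Qed.
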